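(* There exists a constant $\delta>0$ depending on the modulus of convexity $m$ of $u$ such that $B_\delta(0)\subset \mathcal{P}(B_R)$. Explicitly, one may take $\delta = \min\left\{ \frac{m_0}{2|Du|_{\partial B_R}},\ \frac{m_0}{2R}\right\}$, where $m_0:=\inf_{\partial B_R}u \geq m(R)$.
   Context: Let $u\in C^4(B_R(0))$ be a convex solution of the Monge-Ampère equation $\det D^2u = f$ in $B_R(0)\subset\mathbb{R}^2$, with $u(0)=0$, $Du(0)=0$, and $0<C_0^{-1}\leq f\leq C_0$. In dimension two such a solution is strictly convex (Aleksandrov, Heinz). Define the injective map $\mathcal{P}: B_R\to\mathbb{R}^2$ by $\mathcal{P}(x)=(u_{x_1}(x), x_2)$ (the coordinate change associated with the partial Legendre transform $u^*(y_1,y_2)=\sup_{x_1}\{x_1y_1-u(x_1,y_2)\}$ in the $e_1$-direction). The modulus of convexity of $u$ is $m(t)=\inf\{u(x)-\ell_z(x): |x-z|>t\}$ for $t>0$, where $\ell_z$ is the supporting function of $u$ at $z$; $m$ is positive by strict convexity. $|Du|_{\partial B_R}$ denotes $\sup_{\partial B_R}|Du|$. *)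

From Stdlib Require Import Reals Lra.
From Coquelicot Require Import Coquelicot.
Open Scope R_scope.

Definition pt := (R * R)%type.

Definition enorm (x : pt) : R := sqrt (fst x ^ 2 + snd x ^ 2).

Definition in_ball (r : R) (x : pt) : Prop := fst x ^ 2 + snd x ^ 2 < r ^ 2.
Definition on_sphere (r : R) (x : pt) : Prop := fst x ^ 2 + snd x ^ 2 = r ^ 2.

Definition pd1 (f : pt -> R) (x : pt) : R := Derive (fun t => f (t, snd x)) (fst x).
Definition pd2 (f : pt -> R) (x : pt) : R := Derive (fun t => f (fst x, t)) (snd x).

Fixpoint Ck (k : nat) (U : pt -> Prop) (f : pt -> R) : Prop :=
  match k with
  | O => forall x, U x -> continuous f x
  | S k' => (forall x, U x -> continuous f x) /\
            (forall x, U x -> ex_derive (fun t => f (t, snd x)) (fst x)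
                           /\ ex_derive (fun t => f (fst x, t)) (snd x)) /\
            Ck k' U (pd1 f) /\ Ck k' U (pd2 f)
  end.

Definition detHess (u : pt -> R) (x : pt) : R :=
  pd1 (pd1 u) x * pd2 (pd2 u) x - pd2 (pd1 u) x * pd1 (pd2 u) x.

Definition convex_on (U : pt -> Prop) (u : pt -> R) : Prop :=
  forall x y t, U x -> U y -> 0 <= t <= 1 ->
    u (t * fst x + (1 - t) * fst y, t * snd x + (1 - t) * snd y)
      <= t * u x + (1 - t) * u y.

Definition ell (u : pt -> R) (z x : pt) : R :=
  u z + pd1 u z * (fst x - fst z) + pd2 u z * (snd x - snd z).

Definition modconv (r : R) (u : pt -> R) (t : R) : Rbar :=
  Glb_Rbar (fun y => exists x z, in_ball r x /\ in_ball r z /\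
     enorm (fst x - fst z, snd x - snd z) > t /\ y = u x - ell u z x).

Definition m0 (r : R) (u : pt -> R) : R :=
  real (Glb_Rbar (fun y => exists x, on_sphere r x /\ y = u x)).

Definition DuB (r : R) (u : pt -> R) : R :=
  real (Lub_Rbar (fun y => exists x, on_sphere r x /\ y = enorm (pd1 u x, pd2 u x))).

Definition Pmap (u : pt -> R) (x : pt) : pt := (pd1 u x, snd x).

Definition delta (r : R) (u : pt -> R) : R :=
  Rmin (m0 r u / (2 * DuB r u)) (m0 r u / (2 * r)).

From Stdlib Require Import Reals Lra Psatz.
From Coquelicot Require Import Coquelicot.
Open Scope R_scope.

(* Along every segment of the ball, u restricts to a convex function of one variable whose
   second derivative is the Hessian quadratic form; convexity and det D^2u > 0 make this form
   positive definite, so u(0) = 0 and Du(0) = 0 force u > 0 away from the origin.  On the ray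
   from 0 to a boundary point p, convexity extended to p by continuity gives u(p/2) <= u(p)/2
   and u(p) <= Du(p).p.  Hence m0 = min u over dB_R is positive, m0 <= R |Du|_{dB_R} (so
   delta > 0), and u(0, y2) <= |y2| |Du|_{dB_R}.  For |y| < delta the function
   t |-> u(t, y2) - t y1 on the chord {x2 = y2} is therefore smaller at t = 0 than at both ends
   of the chord, so it has an interior critical point, where u_{x1} = y1.  Finally the points
   x = l p and z = (2 l - 2) p are more than R apart and u(x) - l_z(x) tends to u(p) as l -> 1,
   which gives m(R) <= m0. *)

(** * Convex functions of one variable *)

Definition convex_interval (phi : R -> R) (a b : R) : Prop :=
  forall s t l, a < s < b -> a < t < b -> 0 <= l <= 1 ->
    phi (l * s + (1 - l) * t) <= l * phi s + (1 - l) * phi t.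

Lemma derivable_pt_lim_le_of_increments phi x d c e :
  derivable_pt_lim phi x d -> 0 < e ->
  (forall h, 0 < h < e -> phi (x + h) - phi x <= h * c) -> d <= c.
Proof.
  intros Hd He Hinc. apply Rnot_lt_le; intros Hlt.
  destruct (Hd (d - c) ltac:(lra)) as [del Hdel].
  set (h := Rmin e del / 2).
  assert (Hh : 0 < h < e /\ h < del).
  { pose proof (cond_pos del). pose proof (Rmin_l e del). pose proof (Rmin_r e del).
    pose proof (Rmin_pos e del He (cond_pos del)). unfold h; lra. }
  assert (Hq := Hdel h ltac:(lra) ltac:(rewrite Rabs_right; lra)).
  apply Rabs_def2 in Hq.
  assert ((phi (x + h) - phi x) / h <= c).
  { apply Rmult_le_reg_r with h; [lra|]. unfold Rdiv.
    rewrite Rmult_assoc, Rinv_l by lra. specialize (Hinc h (proj1 Hh)). lra. }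
  lra.
Qed.

Lemma convex_tangent_le phi a b x y d :
  convex_interval phi a b -> a < x < b -> a < y < b -> derivable_pt_lim phi x d ->
  phi x + d * (y - x) <= phi y.
Proof.
  intros Hc Hx Hy Hd.
  set (psi := fun h => phi (x + h * (y - x))).
  assert (Hpsi : derivable_pt_lim psi 0 (d * (y - x))).
  { apply is_derive_Reals. unfold psi.
    replace (d * (y - x)) with (scal (y - x) d) by (cbn; unfold mult; cbn; ring).
    apply (is_derive_comp phi (fun h => x + h * (y - x))).
    - rewrite Rmult_0_l, Rplus_0_r. apply is_derive_Reals, Hd.
    - auto_derive; auto; ring. }
  enough (d * (y - x) <= phi y - phi x) by lra.
  apply (derivable_pt_lim_le_of_increments psi 0 _ _ 1 Hpsi ltac:(lra)).
  intros h Hh. unfold psi. rewrite Rplus_0_l, Rmult_0_l, Rplus_0_r.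
  replace (x + h * (y - x)) with (h * y + (1 - h) * x) by ring.
  specialize (Hc y x h Hy Hx ltac:(lra)). lra.
Qed.

Lemma convex_derive_le phi a b x y dx dy :
  convex_interval phi a b -> a < x < b -> a < y < b -> x < y ->
  derivable_pt_lim phi x dx -> derivable_pt_lim phi y dy -> dx <= dy.
Proof.
  intros Hc Hx Hy Hxy Hdx Hdy.
  pose proof (convex_tangent_le _ _ _ _ _ _ Hc Hx Hy Hdx).
  pose proof (convex_tangent_le _ _ _ _ _ _ Hc Hy Hx Hdy). nra.
Qed.

Lemma convex_second_derive_ge0 phi dphi a b x l :
  convex_interval phi a b -> a < x < b ->
  (forall t, a < t < b -> derivable_pt_lim phi t (dphi t)) ->
  derivable_pt_lim dphi x l -> 0 <= l.
Proof.
  intros Hc Hx Hd Hl.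
  enough (- l <= 0) by lra.
  apply (derivable_pt_lim_le_of_increments (fun t => - dphi t) x _ 0 (b - x));
    [now apply derivable_pt_lim_opp | lra |].
  intros h Hh.
  pose proof (convex_derive_le _ _ _ x (x + h) _ _ Hc Hx ltac:(lra) ltac:(lra)
    (Hd x Hx) (Hd (x + h) ltac:(lra))). lra.
Qed.

Lemma continuous_le_at_left (f g : R -> R) a b :
  a < b -> (forall t, a < t < b -> f t <= g t) ->
  continuous f b -> continuous g b -> f b <= g b.
Proof.
  intros Hab Hfg Hf Hg.
  apply (filterlim_le (F := at_left b) f g (f b) (g b)).
  - exists (mkposreal _ (proj2 (Rlt_0_minus _ _) Hab)). intros t Ht Htb. apply Hfg.
    apply Rabs_def2 in Ht. cbn in Ht. lra.
  - exact (filterlim_filter_le_1 _ (filter_le_within _) Hf).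
  - exact (filterlim_filter_le_1 _ (filter_le_within _) Hg).
Qed.

Lemma convex_chord_le phi c b a :
  c < 0 -> 0 <= a <= b -> 0 < b -> convex_interval phi c b -> phi 0 = 0 ->
  continuous phi b -> b * phi a <= a * phi b.
Proof.
  intros Hc Ha Hb Hconv H0 Hcont.
  destruct (Req_dec a b) as [-> | Hab]; [lra|].
  apply (continuous_le_at_left (fun t => t * phi a) (fun t => a * phi t) a b); [lra| | |].
  - intros t Ht.
    assert (Hl : 0 <= a / t <= 1).
    { split; [apply Rdiv_le_0_compat; lra|]. apply Rmult_le_reg_r with t; [lra|].
      field_simplify; lra. }
    pose proof (Hconv t 0 (a / t) ltac:(lra) ltac:(lra) Hl) as H.
    replace (a / t * t + (1 - a / t) * 0) with a in H by (field; lra).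
    rewrite H0, Rmult_0_r, Rplus_0_r in H.
    apply Rmult_le_compat_l with (r := t) in H; [|lra].
    replace (t * (a / t * phi t)) with (a * phi t) in H by (field; lra). lra.
  - apply (continuous_mult (fun t => t) (fun _ => phi a));
      [apply continuous_id | apply continuous_const].
  - apply (continuous_mult (fun _ => a) phi); [apply continuous_const | exact Hcont].
Qed.

Lemma convex_endpoint_tangent phi dphi c b :
  c < 0 -> 0 < b -> convex_interval phi c b ->
  (forall t, c < t < b -> derivable_pt_lim phi t (dphi t)) -> phi 0 = 0 ->
  continuous phi b -> continuous dphi b -> phi b <= b * dphi b.
Proof.
  intros Hc Hb Hconv Hd H0 Hphi Hdphi.
  apply (continuous_le_at_left phi (fun t => t * dphi t) 0 b Hb); [| exact Hphi |].
  - intros t Ht.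
    pose proof (convex_tangent_le phi c b t 0 (dphi t) Hconv ltac:(lra) ltac:(lra)
      (Hd t ltac:(lra))). lra.
  - apply (continuous_mult (fun t => t) dphi); [apply continuous_id | exact Hdphi].
Qed.

Lemma derivable_pt_lim_root_of_endpoints h dh a b c : a < c < b ->
  (forall t, a <= t <= b -> continuity_pt h t) ->
  (forall t, a < t < b -> derivable_pt_lim h t (dh t)) ->
  h c < h a -> h c < h b -> exists t0, a < t0 < b /\ dh t0 = 0.
Proof.
  intros Hc Hcont Hd Ha Hb.
  destruct (continuity_ab_min h a b ltac:(lra) Hcont) as [t0 [Hmin Ht0]].
  assert (Ht0' : a < t0 < b).
  { pose proof (Hmin c ltac:(lra)).
    split; apply Rnot_le_lt; intros Hle;
      [replace t0 with a in * by lra | replace t0 with b in * by lra]; lra. }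
  exists t0. split; [exact Ht0'|].
  exact (deriv_minimum h a b t0 (exist _ (dh t0) (Hd t0 Ht0')) (proj1 Ht0') (proj2 Ht0')
    (fun t Hat Htb => Hmin t (conj (Rlt_le _ _ Hat) (Rlt_le _ _ Htb)))).
Qed.

(** * Calculus along lines in the plane *)

Definition line (a q : pt) (t : R) : pt := (fst a + t * fst q, snd a + t * snd q).

Definition dir_deriv (g : pt -> R) (x q : pt) : R := pd1 g x * fst q + pd2 g x * snd q.

Definition hess_form (g : pt -> R) (x q : pt) : R :=
  dir_deriv (pd1 g) x q * fst q + dir_deriv (pd2 g) x q * snd q.

Lemma line_0 a q : line a q 0 = a.
Proof. destruct a; unfold line; cbn; f_equal; ring. Qed.

Lemma line_origin_1 p : line (0, 0) p 1 = p.
Proof. destruct p; unfold line; cbn; f_equal; ring. Qed.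

Lemma continuous_line a q t : continuous (line a q) t.
Proof.
  apply (continuous_comp_2 (fun s => fst a + s * fst q) (fun s => snd a + s * snd q) pair);
    [apply continuity_pt_filterlim; reg .. |].
  apply (continuous_ext (fun x => x)); [intros [? ?]; reflexivity | apply continuous_id].
Qed.

Lemma continuous_along_line (g : pt -> R) a q t :
  continuous g (line a q t) -> continuous (fun s => g (line a q s)) t.
Proof. intros Hg. exact (continuous_comp _ g t (continuous_line a q t) Hg). Qed.

Lemma continuous_norm2 (x : pt) : continuous (fun y : pt => fst y ^ 2 + snd y ^ 2) x.
Proof.
  apply (continuous_plus (fun y : pt => fst y ^ 2) (fun y : pt => snd y ^ 2)).
  - apply (continuous_comp fst (fun a => a ^ 2)); [apply continuous_fst |].
    apply continuity_pt_filterlim. reg.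
  - apply (continuous_comp snd (fun a => a ^ 2)); [apply continuous_snd |].
    apply continuity_pt_filterlim. reg.
Qed.

Lemma in_ball_locally r x : in_ball r x -> locally x (in_ball r).
Proof.
  apply (open_comp (fun x : pt => fst x ^ 2 + snd x ^ 2) (fun s => s < r ^ 2));
    [intros y _; apply continuous_norm2 | apply open_lt].
Qed.

Lemma in_ball_line_small r a q : in_ball r a ->
  exists d, 0 < d /\ forall t, -d < t < d -> in_ball r (line a q t).
Proof.
  intros Ha.
  assert (Hl : locally 0 (fun t => in_ball r (line a q t))).
  { apply (continuous_line a q 0).
    rewrite line_0. now apply in_ball_locally. }
  destruct Hl as [d Hd]. exists d. split; [apply cond_pos|].
  intros t Ht. apply Hd. cbn. unfold AbsRing_ball, abs, minus, plus, opp; cbn.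
  apply Rabs_def1; lra.
Qed.

Lemma in_ball_line_origin r p t :
  t ^ 2 * (fst p ^ 2 + snd p ^ 2) < r ^ 2 -> in_ball r (line (0, 0) p t).
Proof.
  unfold in_ball, line; cbn [fst snd]. intros H.
  replace ((0 + t * fst p) ^ 2 + (0 + t * snd p) ^ 2) with (t ^ 2 * (fst p ^ 2 + snd p ^ 2))
    by ring. exact H.
Qed.

Lemma convex_on_line r u a q c d : convex_on (in_ball r) u ->
  (forall t, c < t < d -> in_ball r (line a q t)) ->
  convex_interval (fun t => u (line a q t)) c d.
Proof.
  intros Hc Hline s t l Hs Ht Hl.
  pose proof (Hc _ _ l (Hline s Hs) (Hline t Ht) Hl) as H.
  unfold line in *; cbn in H.
  replace (fst a + (l * s + (1 - l) * t) * fst q, snd a + (l * s + (1 - l) * t) * snd q)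
    with (l * (fst a + s * fst q) + (1 - l) * (fst a + t * fst q),
          l * (snd a + s * snd q) + (1 - l) * (snd a + t * snd q)) by (f_equal; ring).
  exact H.
Qed.

Lemma Ck_S k U f : Ck (S k) U f -> Ck k U f.
Proof.
  revert U f; induction k as [|k IH]; intros U f (Hc & Hd & H1 & H2); [exact Hc|].
  split; [exact Hc|]. split; [exact Hd|]. split; apply IH; assumption.
Qed.

Lemma Ck_continuous k U f x : Ck k U f -> U x -> continuous f x.
Proof. destruct k; [auto | intros []; auto]. Qed.

Lemma Ck1_differentiable r g x : Ck 1 (in_ball r) g -> in_ball r x ->
  differentiable_pt_lim (fun a b => g (a, b)) (fst x) (snd x) (pd1 g x) (pd2 g x).
Proof.
  intros (_ & Hd & Hc1 & _) Hx. destruct x as [x1 x2].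
  apply filterdiff_differentiable_pt_lim.
  apply (is_derive_filterdiff (fun a b => g (a, b)) _ _ (fun a b => pd1 g (a, b))).
  - apply (filter_imp (in_ball r)); [| now apply in_ball_locally].
    intros [y1 y2] Hy. apply Derive_correct, (Hd _ Hy).
  - apply Derive_correct, (Hd _ Hx).
  - apply (continuous_ext (pd1 g)); [now intros [] | exact (Hc1 _ Hx)].
Qed.

Lemma derivable_pt_lim_line r g a q t : Ck 1 (in_ball r) g -> in_ball r (line a q t) ->
  derivable_pt_lim (fun s => g (line a q s)) t (dir_deriv g (line a q t) q).
Proof.
  intros Hg Ht.
  apply (derivable_pt_lim_comp_2d (fun a b => g (a, b))).
  - exact (Ck1_differentiable r g _ Hg Ht).
  - apply is_derive_Reals. auto_derive; auto; ring.
  - apply is_derive_Reals. auto_derive; auto; ring.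
Qed.

Lemma derivable_pt_lim_line_dir_deriv r g a q t : Ck 2 (in_ball r) g -> in_ball r (line a q t) ->
  derivable_pt_lim (fun s => dir_deriv g (line a q s) q) t (hess_form g (line a q t) q).
Proof.
  intros (_ & _ & H1 & H2) Ht. unfold dir_deriv, hess_form.
  apply (derivable_pt_lim_plus (fun s => _ * fst q) (fun s => _ * snd q));
    apply derivable_pt_lim_scal_right; apply (derivable_pt_lim_line r); auto using Ck_S.
Qed.

Lemma pd_comm r g x : Ck 2 (in_ball r) g -> in_ball r x ->
  pd1 (pd2 g) x = pd2 (pd1 g) x.
Proof.
  intros (_ & Hd & (_ & Hd1 & _ & Hc12) & (_ & Hd2 & Hc21 & _)) Hx.
  destruct x as [x1 x2]. unfold pd1, pd2; cbn.
  apply (Schwarz (fun a b => g (a, b))).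
  - apply locally_2d_locally.
    apply (filter_imp (in_ball r)); [| now apply in_ball_locally].
    intros [y1 y2] Hy. cbn.
    destruct (Hd _ Hy), (Hd1 _ Hy), (Hd2 _ Hy). auto.
  - apply continuity_2d_pt_filterlim.
    apply (continuous_ext (pd1 (pd2 g))); [now intros [] | exact (Hc21 _ Hx)].
  - apply continuity_2d_pt_filterlim.
    apply (continuous_ext (pd2 (pd1 g))); [now intros [] | exact (Hc12 _ Hx)].
Qed.

Lemma continuous_dir_deriv g x q : continuous (pd1 g) x -> continuous (pd2 g) x ->
  continuous (fun y => dir_deriv g y q) x.
Proof.
  intros H1 H2. unfold dir_deriv.
  apply (continuous_plus (fun y => pd1 g y * fst q) (fun y => pd2 g y * snd q)).
  - apply (continuous_mult (pd1 g) (fun _ => fst q)); [exact H1 | apply continuous_const].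
  - apply (continuous_mult (pd2 g) (fun _ => snd q)); [exact H2 | apply continuous_const].
Qed.

Lemma quadratic_form_pos A B C a b : 0 <= A -> 0 < A * C - B * B -> (a, b) <> (0, 0) ->
  0 < (A * a + B * b) * a + (B * a + C * b) * b.
Proof.
  intros HA Hdet Hab.
  assert (HA' : 0 < A) by (destruct HA as [HA | <-]; nra).
  assert (HC : 0 < C) by nra.
  destruct (Req_dec b 0) as [-> | Hb].
  - assert (Ha : a <> 0) by (intros ->; auto). pose proof (pow2_gt_0 a Ha). nra.
  - pose proof (pow2_gt_0 b Hb).
    enough (0 < A * ((A * a + B * b) * a + (B * a + C * b) * b)) by nra.
    replace (A * ((A * a + B * b) * a + (B * a + C * b) * b))
      with ((A * a + B * b) ^ 2 + b ^ 2 * (A * C - B * B)) by ring.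
    pose proof (pow2_ge_0 (A * a + B * b)). nra.
Qed.

Lemma dot_le_enorm a b : fst a * fst b + snd a * snd b <= enorm a * enorm b.
Proof.
  unfold enorm. destruct a as [a1 a2], b as [b1 b2]; cbn [fst snd].
  rewrite <- sqrt_mult by nra.
  apply Rle_trans with (1 := Rle_abs _). rewrite <- sqrt_Rsqr_abs.
  apply sqrt_le_1_alt. unfold Rsqr.
  pose proof (pow2_ge_0 (a1 * b2 - a2 * b1)). nra.
Qed.

Lemma enorm_sphere r p : 0 <= r -> on_sphere r p -> enorm p = r.
Proof. intros Hr Hp. unfold enorm. rewrite Hp. now apply sqrt_pow2. Qed.

Lemma Rabs_le_enorm a b : Rabs a <= enorm (a, b) /\ Rabs b <= enorm (a, b).
Proof.
  unfold enorm; cbn [fst snd].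
  split.
  - rewrite <- (sqrt_pow2 (Rabs a)) by apply Rabs_pos.
    apply sqrt_le_1_alt. rewrite pow2_abs. pose proof (pow2_ge_0 b). lra.
  - rewrite <- (sqrt_pow2 (Rabs b)) by apply Rabs_pos.
    apply sqrt_le_1_alt. rewrite pow2_abs. pose proof (pow2_ge_0 a). lra.
Qed.

Lemma continuous_enorm_pair (f g : pt -> R) x : continuous f x -> continuous g x ->
  continuous (fun y => enorm (f y, g y)) x.
Proof.
  intros Hf Hg. apply (continuous_comp (fun y => (f y, g y)) enorm).
  - apply (continuous_comp_2 f g pair); [exact Hf | exact Hg |].
    apply (continuous_ext (fun x => x)); [intros [? ?]; reflexivity | apply continuous_id].
  - apply (continuous_comp _ sqrt); [apply continuous_norm2 |].
    apply continuity_pt_filterlim, continuity_pt_sqrt. cbn [fst snd]. nra.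
Qed.

(** * Extrema on the circle *)

Lemma on_sphere_half_circle r sg s : sg = 1 \/ sg = -1 -> -r <= s <= r ->
  on_sphere r (s, sg * sqrt (r ^ 2 - s ^ 2)).
Proof.
  intros Hsg Hs. unfold on_sphere; cbn [fst snd].
  rewrite Rpow_mult_distr, pow2_sqrt by nra. destruct Hsg as [-> | ->]; ring.
Qed.

Lemma sphere_half_circle r p : 0 < r -> on_sphere r p ->
  -r <= fst p <= r /\ exists sg, (sg = 1 \/ sg = -1) /\ p = (fst p, sg * sqrt (r ^ 2 - fst p ^ 2)).
Proof.
  intros Hr Hp. unfold on_sphere in Hp. split; [nra|].
  replace (r ^ 2 - fst p ^ 2) with (snd p ^ 2) by lra.
  rewrite <- Rsqr_pow2, sqrt_Rsqr_abs. destruct p as [p1 p2]; cbn [fst snd].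
  destruct (Rle_lt_dec 0 p2).
  - exists 1. rewrite Rabs_right by lra. split; [now left | f_equal; ring].
  - exists (-1). rewrite Rabs_left by lra. split; [now right | f_equal; ring].
Qed.

Lemma half_circle_attains_min (G : pt -> R) r sg : 0 < r -> sg = 1 \/ sg = -1 ->
  (forall p, on_sphere r p -> continuous G p) ->
  exists q, on_sphere r q /\
    forall s, -r <= s <= r -> G q <= G (s, sg * sqrt (r ^ 2 - s ^ 2)).
Proof.
  intros Hr Hsg HG.
  destruct (continuity_ab_min (fun s => G (s, sg * sqrt (r ^ 2 - s ^ 2))) (-r) r ltac:(lra))
    as [s0 [Hmin Hs0]].
  - intros s Hs. apply continuity_pt_filterlim.
    apply (continuous_comp (fun s => (s, sg * sqrt (r ^ 2 - s ^ 2))) G);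
      [| now apply HG, on_sphere_half_circle].
    apply (continuous_comp_2 (fun s => s) (fun s => sg * sqrt (r ^ 2 - s ^ 2)) pair);
      [apply continuous_id | |].
    + apply continuity_pt_filterlim, continuity_pt_scal.
      apply (continuity_pt_comp (fun t => r ^ 2 - t ^ 2) sqrt); [reg | apply continuity_pt_sqrt; nra].
    + apply (continuous_ext (fun x => x)); [intros [? ?]; reflexivity | apply continuous_id].
  - exists (s0, sg * sqrt (r ^ 2 - s0 ^ 2)). split; [now apply on_sphere_half_circle | exact Hmin].
Qed.

Lemma sphere_attains_min (G : pt -> R) r : 0 < r ->
  (forall p, on_sphere r p -> continuous G p) ->
  exists q, on_sphere r q /\ forall p, on_sphere r p -> G q <= G p.
Proof.
  intros Hr HG.
  destruct (half_circle_attains_min G r 1 Hr (or_introl eq_refl) HG) as [q1 [Hq1 H1]].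
  destruct (half_circle_attains_min G r (-1) Hr (or_intror eq_refl) HG) as [q2 [Hq2 H2]].
  assert (Hle : forall p, on_sphere r p -> Rmin (G q1) (G q2) <= G p).
  { intros p Hp. destruct (sphere_half_circle r p Hr Hp) as [Hp1 [sg [[-> | ->] ->]]].
    - eapply Rle_trans; [apply Rmin_l | now apply H1].
    - eapply Rle_trans; [apply Rmin_r | now apply H2]. }
  destruct (Rle_lt_dec (G q1) (G q2)).
  - exists q1. split; [exact Hq1|]. intros p Hp. rewrite <- (Rmin_left _ _ r0). now apply Hle.
  - exists q2. split; [exact Hq2|]. intros p Hp. rewrite <- (Rmin_right (G q1) (G q2)) by lra.
    now apply Hle.
Qed.

Lemma sphere_attains_max (G : pt -> R) r : 0 < r ->
  (forall p, on_sphere r p -> continuous G p) ->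
  exists q, on_sphere r q /\ forall p, on_sphere r p -> G p <= G q.
Proof.
  intros Hr HG.
  destruct (sphere_attains_min (fun p => - G p) r Hr) as [q [Hq Hmin]].
  - intros p Hp. apply (continuous_opp G), HG, Hp.
  - exists q. split; [exact Hq|]. intros p Hp. specialize (Hmin p Hp). lra.
Qed.

Lemma Glb_Rbar_attained (E : R -> Prop) m : E m -> (forall y, E y -> m <= y) -> Glb_Rbar E = m.
Proof.
  intros Hm Hlb. apply is_glb_Rbar_unique. split.
  - intros y Hy. exact (Hlb y Hy).
  - intros l Hl. exact (Hl m Hm).
Qed.

Lemma Lub_Rbar_attained (E : R -> Prop) m : E m -> (forall y, E y -> y <= m) -> Lub_Rbar E = m.
Proof.
  intros Hm Hub. apply is_lub_Rbar_unique. split.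
  - intros y Hy. exact (Hub y Hy).
  - intros l Hl. exact (Hl m Hm).
Qed.

Lemma m0_eq_min r u q : on_sphere r q -> (forall p, on_sphere r p -> u q <= u p) ->
  m0 r u = u q.
Proof.
  intros Hq Hmin. unfold m0.
  rewrite (Glb_Rbar_attained _ (u q)); [reflexivity | now exists q |].
  intros y [p [Hp ->]]. now apply Hmin.
Qed.

Lemma DuB_eq_max r u q : on_sphere r q ->
  (forall p, on_sphere r p -> enorm (pd1 u p, pd2 u p) <= enorm (pd1 u q, pd2 u q)) ->
  DuB r u = enorm (pd1 u q, pd2 u q).
Proof.
  intros Hq Hmax. unfold DuB.
  rewrite (Lub_Rbar_attained _ (enorm (pd1 u q, pd2 u q))); [reflexivity | now exists q |].
  intros y [p [Hp ->]]. now apply Hmax.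
Qed.

(** * Convex solutions *)

Section ConvexSolution.

Variables (r : R) (u : pt -> R).
Hypothesis r_pos : 0 < r.
Hypothesis u_C2 : Ck 2 (in_ball r) u.
Hypothesis u_C1_closed : Ck 1 (fun x => in_ball r x \/ on_sphere r x) u.
Hypothesis u_convex : convex_on (in_ball r) u.
Hypothesis detHess_pos : forall x, in_ball r x -> 0 < detHess u x.
Hypothesis u_0 : u (0, 0) = 0.
Hypothesis pd1_u_0 : pd1 u (0, 0) = 0.
Hypothesis pd2_u_0 : pd2 u (0, 0) = 0.

Lemma hess_form_pos w q : in_ball r w -> q <> (0, 0) -> 0 < hess_form u w q.
Proof.
  intros Hw Hq.
  assert (Hsym := pd_comm r u w u_C2 Hw).
  assert (HA : 0 <= pd1 (pd1 u) w).
  { destruct (in_ball_line_small r w (1, 0) Hw) as [d [Hd Hline]].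
    assert (Hw0 : in_ball r (line w (1, 0) 0)) by (rewrite line_0; exact Hw).
    pose proof (convex_second_derive_ge0 _ (fun t => dir_deriv u (line w (1, 0) t) (1, 0))
      (-d) d 0 _ (convex_on_line r u w (1, 0) _ _ u_convex Hline) ltac:(lra)
      (fun t Ht => derivable_pt_lim_line r u w (1, 0) t (Ck_S _ _ _ u_C2) (Hline t Ht))
      (derivable_pt_lim_line_dir_deriv r u w (1, 0) 0 u_C2 Hw0)) as H.
    rewrite line_0 in H. unfold hess_form, dir_deriv in H; cbn in H. lra. }
  pose proof (detHess_pos w Hw) as Hdet. unfold detHess in Hdet. rewrite Hsym in Hdet.
  unfold hess_form, dir_deriv. rewrite Hsym. destruct q as [a b].
  now apply quadratic_form_pos.
Qed.

Lemma convex_solution_pos q : in_ball r q -> q <> (0, 0) -> 0 < u q.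
Proof.
  intros Hq Hq0.
  assert (Hline : forall t, 0 <= t <= 1 -> in_ball r (line (0, 0) q t)).
  { intros t Ht. apply in_ball_line_origin. unfold in_ball in Hq.
    pose proof (pow2_ge_0 (fst q)). pose proof (pow2_ge_0 (snd q)).
    assert (t ^ 2 <= 1) by nra. nra. }
  destruct (MVT_cor2 (fun t => u (line (0, 0) q t)) (fun t => dir_deriv u (line (0, 0) q t) q)
    0 1 ltac:(lra)) as [c [Hc Hc01]].
  { intros t Ht. apply (derivable_pt_lim_line r); [apply Ck_S, u_C2 | now apply Hline]. }
  destruct (MVT_cor2 (fun t => dir_deriv u (line (0, 0) q t) q)
    (fun t => hess_form u (line (0, 0) q t) q) 0 c ltac:(lra)) as [xi [Hxi Hxi0c]].
  { intros t Ht. apply (derivable_pt_lim_line_dir_deriv r); [exact u_C2 | apply Hline; lra]. }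
  assert (Hpos : 0 < hess_form u (line (0, 0) q xi) q) by (apply hess_form_pos; auto; apply Hline; lra).
  rewrite line_origin_1, line_0, u_0 in Hc. rewrite line_0 in Hxi.
  unfold dir_deriv at 2 in Hxi. rewrite pd1_u_0, pd2_u_0 in Hxi. nra.
Qed.

Lemma convex_solution_nonneg x : in_ball r x -> 0 <= u x.
Proof.
  intros Hx. destruct x as [x1 x2].
  destruct (Req_dec x1 0) as [-> | H1]; [destruct (Req_dec x2 0) as [-> | H2] |];
    [lra | apply Rlt_le, convex_solution_pos; [exact Hx | congruence] ..].
Qed.

Lemma in_ball_ray p t : on_sphere r p -> -1 < t < 1 -> in_ball r (line (0, 0) p t).
Proof.
  intros Hp Ht. apply in_ball_line_origin. rewrite Hp.
  assert (t ^ 2 < 1) by nra. assert (0 < r ^ 2) by nra. nra.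
Qed.

Lemma continuous_sphere p : on_sphere r p -> continuous u p.
Proof. intros Hp. exact (Ck_continuous 1 _ u p u_C1_closed (or_intror Hp)). Qed.

Lemma ray_chord_le p a : on_sphere r p -> 0 <= a <= 1 -> u (line (0, 0) p a) <= a * u p.
Proof.
  intros Hp Ha.
  pose proof (convex_chord_le (fun t => u (line (0, 0) p t)) (-1) 1 a ltac:(lra) Ha ltac:(lra)
    (convex_on_line r u _ _ _ _ u_convex (fun t Ht => in_ball_ray p t Hp Ht))) as H.
  cbv beta in H. rewrite line_0, line_origin_1, Rmult_1_l in H. apply H; [exact u_0|].
  apply continuous_along_line. rewrite line_origin_1. now apply continuous_sphere.
Qed.

Lemma sphere_le_dir_deriv p : on_sphere r p -> u p <= dir_deriv u p p.
Proof.
  intros Hp. destruct u_C1_closed as (_ & _ & Hc1 & Hc2).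
  pose proof (convex_endpoint_tangent (fun t => u (line (0, 0) p t))
    (fun t => dir_deriv u (line (0, 0) p t) p) (-1) 1 ltac:(lra) ltac:(lra)
    (convex_on_line r u _ _ _ _ u_convex (fun t Ht => in_ball_ray p t Hp Ht))) as H.
  cbv beta in H. rewrite line_0, line_origin_1, Rmult_1_l in H. apply H; [| exact u_0 | |].
  - intros t Ht. apply (derivable_pt_lim_line r); [apply Ck_S, u_C2 | now apply in_ball_ray].
  - apply continuous_along_line. rewrite line_origin_1. now apply continuous_sphere.
  - apply (continuous_along_line (fun y => dir_deriv u y p)). rewrite line_origin_1.
    apply continuous_dir_deriv; [apply Hc1 | apply Hc2]; now right.
Qed.

Lemma sphere_le_grad_norm p : on_sphere r p -> u p <= r * enorm (pd1 u p, pd2 u p).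
Proof.
  intros Hp. eapply Rle_trans; [now apply sphere_le_dir_deriv|].
  rewrite <- (enorm_sphere r p (Rlt_le _ _ r_pos) Hp) at 1. rewrite Rmult_comm.
  apply (dot_le_enorm (pd1 u p, pd2 u p) p).
Qed.

Lemma sphere_pos p : on_sphere r p -> 0 < u p.
Proof.
  intros Hp.
  pose proof (ray_chord_le p (1 / 2) Hp ltac:(lra)).
  enough (0 < u (line (0, 0) p (1 / 2))) by lra.
  apply convex_solution_pos; [apply in_ball_ray; [exact Hp | lra]|].
  unfold line; cbn [fst snd]. intros Heq. injection Heq as E1 E2.
  unfold on_sphere in Hp. nra.
Qed.

Lemma vertical_axis_le D y2 : (forall p, on_sphere r p -> enorm (pd1 u p, pd2 u p) <= D) ->
  Rabs y2 <= r -> u (0, y2) <= Rabs y2 * D.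
Proof.
  intros HD Hy2.
  destruct (Req_dec y2 0) as [-> | Hy0]; [rewrite u_0, Rabs_R0; lra|].
  assert (Habs : 0 < Rabs y2) by now apply Rabs_pos_lt.
  set (p := (0, r * (y2 / Rabs y2))).
  assert (Hp : on_sphere r p).
  { assert (Hs : (y2 / Rabs y2) ^ 2 = 1) by (unfold Rabs; destruct (Rcase_abs y2); field; lra).
    unfold on_sphere, p; cbn [fst snd]. rewrite Rpow_mult_distr, Hs. ring. }
  assert (Hline : line (0, 0) p (Rabs y2 / r) = (0, y2)).
  { unfold line, p; cbn [fst snd]. f_equal; [ring | field; lra]. }
  assert (Ha : 0 <= Rabs y2 / r <= 1).
  { split; [apply Rdiv_le_0_compat; lra|]. apply Rmult_le_reg_r with r; [lra|].
    field_simplify; lra. }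
  rewrite <- Hline.
  eapply Rle_trans; [now apply ray_chord_le|].
  eapply Rle_trans; [apply Rmult_le_compat_l; [lra | now apply sphere_le_grad_norm]|].
  apply Rle_trans with (Rabs y2 / r * (r * D)); [apply Rmult_le_compat_l; [lra|]|].
  - apply Rmult_le_compat_l; [lra | now apply HD].
  - right. field. lra.
Qed.

Lemma continuous_dir_deriv_ball x q : in_ball r x -> continuous (fun y => dir_deriv u y q) x.
Proof.
  intros Hx. destruct u_C2 as (_ & _ & H1 & H2).
  apply continuous_dir_deriv; [apply (Ck_continuous 1 _ _ _ H1) | apply (Ck_continuous 1 _ _ _ H2)];
    exact Hx.
Qed.

Lemma modconv_le_ray p l : on_sphere r p -> 1 / 2 < l < 1 ->
  Rbar_le (modconv r u r)
    (u (line (0, 0) p l) - (2 - l) * dir_deriv u (line (0, 0) p (2 * l - 2)) p).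
Proof.
  intros Hp Hl.
  set (x := line (0, 0) p l). set (z := line (0, 0) p (2 * l - 2)).
  assert (Hz : in_ball r z) by (apply in_ball_ray; [exact Hp | lra]).
  apply Rbar_le_trans with (u x - ell u z x).
  - apply (proj1 (Glb_Rbar_correct _)). exists x, z.
    split; [apply in_ball_ray; [exact Hp | lra]|]. split; [exact Hz|]. split; [|reflexivity].
    unfold enorm, x, z, line; cbn [fst snd].
    replace ((0 + l * fst p - (0 + (2 * l - 2) * fst p)) ^ 2
           + (0 + l * snd p - (0 + (2 * l - 2) * snd p)) ^ 2)
      with ((2 - l) ^ 2 * (fst p ^ 2 + snd p ^ 2)) by ring.
    rewrite Hp, <- Rpow_mult_distr, sqrt_pow2 by nra. nra.
  - cbn. pose proof (convex_solution_nonneg _ Hz) as Hu.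
    unfold ell, dir_deriv, x, z, line in *; cbn [fst snd] in *. nra.
Qed.

Lemma modconv_le_sphere p : on_sphere r p -> Rbar_le (modconv r u r) (u p).
Proof.
  intros Hp.
  set (dz := fun l => dir_deriv u (line (0, 0) p (2 * l - 2)) p).
  assert (Hdz : continuous dz 1).
  { set (a := (-2 * fst p, -2 * snd p)). set (q := (2 * fst p, 2 * snd p)).
    apply (continuous_ext (fun l => dir_deriv u (line a q l) p)).
    { intros l. unfold dz, line, a, q; cbn [fst snd]. do 2 f_equal; ring. }
    apply (continuous_along_line (fun y => dir_deriv u y p)).
    replace (line a q 1) with ((0, 0) : pt) by (unfold line, a, q; cbn [fst snd]; f_equal; ring).
    apply continuous_dir_deriv_ball. unfold in_ball; cbn [fst snd]. nra. }
  assert (Hdz1 : dz 1 = 0).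
  { unfold dz. replace (2 * 1 - 2) with 0 by ring.
    rewrite line_0. unfold dir_deriv. rewrite pd1_u_0, pd2_u_0. ring. }
  assert (Hlb : forall l, 1 / 2 < l < 1 ->
    Rbar_le (modconv r u r) (u (line (0, 0) p l) - (2 - l) * dz l))
    by (intros l Hl; now apply modconv_le_ray).
  revert Hlb. destruct (modconv r u r) as [v | |]; cbn; [intros Hlb | | trivial].
  - enough (v + (2 - 1) * dz 1 <= u (line (0, 0) p 1)) by (rewrite line_origin_1 in *; lra).
    apply (continuous_le_at_left (fun l => v + (2 - l) * dz l) (fun l => u (line (0, 0) p l))
      (1 / 2) 1 ltac:(lra)).
    + intros l Hl. specialize (Hlb l Hl). lra.
    + apply (continuous_plus (fun _ => v) (fun l => (2 - l) * dz l)); [apply continuous_const|].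
      apply (continuous_mult (fun l => 2 - l)); [apply continuity_pt_filterlim; reg | exact Hdz].
    + apply continuous_along_line. rewrite line_origin_1. now apply continuous_sphere.
  - intros Hlb. exact (Hlb (3 / 4) ltac:(lra)).
Qed.

Lemma Pmap_preimage m y1 y2 : (forall p, on_sphere r p -> m <= u p) -> Rabs y2 < r ->
  u (0, y2) + r * Rabs y1 < m -> exists x, in_ball r x /\ Pmap u x = (y1, y2).
Proof.
  intros Hm Hy2 Hy.
  set (x := line (0, y2) (1, 0)).
  assert (Hx : forall t, fst (x t) ^ 2 + snd (x t) ^ 2 = t ^ 2 + y2 ^ 2)
    by (intros t; unfold x, line; cbn [fst snd]; ring).
  assert (Hy2' : y2 ^ 2 < r ^ 2) by (rewrite <- (pow2_abs y2); pose proof (Rabs_pos y2); nra).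
  set (s := sqrt (r ^ 2 - y2 ^ 2)).
  assert (Hs2 : s ^ 2 = r ^ 2 - y2 ^ 2) by (apply pow2_sqrt; lra).
  assert (Hs : 0 < s <= r) by (split; [apply sqrt_lt_R0; lra | nra]).
  assert (Hin : forall t, -s < t < s -> in_ball r (x t)) by (intros t Ht; unfold in_ball; rewrite Hx; nra).
  assert (Hend : forall t, t ^ 2 = s ^ 2 -> u (x 0) - 0 * y1 < u (x t) - t * y1).
  { intros t Ht. unfold x at 1. rewrite line_0.
    assert (m <= u (x t)) by (apply Hm; unfold on_sphere; rewrite Hx; lra).
    assert (t * y1 <= r * Rabs y1).
    { apply Rle_trans with (Rabs (t * y1)); [apply Rle_abs|]. rewrite Rabs_mult.
      apply Rmult_le_compat_r; [apply Rabs_pos|]. apply Rabs_le. nra. }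
    lra. }
  destruct (derivable_pt_lim_root_of_endpoints (fun t => u (x t) - t * y1)
    (fun t => dir_deriv u (x t) (1, 0) - y1) (-s) s 0) as [t0 [Ht0 Hd]];
    [lra | | | apply Hend; ring | apply Hend; ring |].
  - intros t Ht. apply continuity_pt_filterlim.
    apply (continuous_minus (fun t => u (x t)) (fun t => t * y1));
      [| apply continuity_pt_filterlim; reg].
    apply continuous_along_line, (Ck_continuous 1 _ _ _ u_C1_closed).
    unfold in_ball, on_sphere. rewrite Hx. apply Rle_lt_or_eq. nra.
  - intros t Ht. apply derivable_pt_lim_minus.
    + apply (derivable_pt_lim_line r); [apply Ck_S, u_C2 | now apply Hin].
    + apply is_derive_Reals. auto_derive; auto; ring.
  - exists (x t0). split; [now apply Hin|].
    unfold Pmap, dir_deriv in *. unfold x, line in *; cbn [fst snd] in *. f_equal; lra.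
Qed.

End ConvexSolution.

Lemma enorm_lt_Rmin m D r y : 0 < m -> 0 < D -> 0 < r ->
  enorm y < Rmin (m / (2 * D)) (m / (2 * r)) ->
  Rabs (snd y) * D < m / 2 /\ r * Rabs (fst y) < m / 2.
Proof.
  intros Hm HD Hr Hy. destruct y as [y1 y2]. destruct (Rabs_le_enorm y1 y2) as [H1 H2].
  pose proof (Rmin_l (m / (2 * D)) (m / (2 * r))). pose proof (Rmin_r (m / (2 * D)) (m / (2 * r))).
  cbn [fst snd]. split.
  - apply Rlt_le_trans with (m / (2 * D) * D); [apply Rmult_lt_compat_r; lra | right; field; lra].
  - apply Rlt_le_trans with (r * (m / (2 * r))); [apply Rmult_lt_compat_l; lra | right; field; lra].
Qed.

Theorem lemma2p1 (r C0 : R) (u f : pt -> R) :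
  0 < r ->
  Ck 4 (in_ball r) u ->
  (* u is C^1 up to the boundary *)
  Ck 1 (fun x => in_ball r x \/ on_sphere r x) u ->
  convex_on (in_ball r) u ->
  (forall x, in_ball r x -> detHess u x = f x) ->
  (forall x, in_ball r x -> / C0 <= f x <= C0) ->
  0 < C0 ->
  u (0, 0) = 0 -> pd1 u (0, 0) = 0 -> pd2 u (0, 0) = 0 ->
  0 < delta r u /\
  Rbar_le (modconv r u r) (Finite (m0 r u)) /\
  (forall y : pt, enorm y < delta r u ->
     exists x, in_ball r x /\ Pmap u x = y).
Proof.
  intros Hr Hu4 Hu1 Hconv Hdet Hf HC0 Hu0 Hp1 Hp2.
  assert (Hu2 : Ck 2 (in_ball r) u) by (do 2 apply Ck_S; exact Hu4).
  assert (Hdet_pos : forall x, in_ball r x -> 0 < detHess u x).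
  { intros x Hx. rewrite Hdet by exact Hx. pose proof (Rinv_0_lt_compat _ HC0).
    specialize (Hf x Hx). lra. }
  destruct (sphere_attains_min u r Hr (continuous_sphere r u Hu1)) as [q [Hq Hmin]].
  destruct (sphere_attains_max (fun p => enorm (pd1 u p, pd2 u p)) r Hr) as [q' [Hq' Hmax]].
  { intros p Hp. destruct Hu1 as (_ & _ & H1 & H2).
    apply continuous_enorm_pair; [apply H1 | apply H2]; now right. }
  unfold delta. rewrite (m0_eq_min r u q Hq Hmin), (DuB_eq_max r u q' Hq' Hmax).
  pose proof (sphere_pos r u Hr Hu2 Hu1 Hconv Hdet_pos Hu0 Hp1 Hp2 q Hq) as Hm.
  pose proof (sphere_le_grad_norm r u Hr Hu2 Hu1 Hconv Hu0 q Hq) as HmD.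
  pose proof (Hmax q Hq). set (D := enorm (pd1 u q', pd2 u q')) in *.
  assert (HD : 0 < D) by nra.
  split; [apply Rmin_pos; apply Rdiv_lt_0_compat; lra | split].
  - exact (modconv_le_sphere r u Hr Hu2 Hu1 Hconv Hdet_pos Hu0 Hp1 Hp2 q Hq).
  - intros [y1 y2] Hy. destruct (enorm_lt_Rmin (u q) D r _ Hm HD Hr Hy) as [Hy2 Hy1].
    cbn [fst snd] in Hy1, Hy2.
    pose proof (vertical_axis_le r u Hr Hu2 Hu1 Hconv Hu0 D y2 Hmax ltac:(nra)).
    apply (Pmap_preimage r u Hr Hu2 Hu1 (u q)); [exact Hmin | nra | lra].
Qed.
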